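(* Let $n\in\mathbb N$ and let $\nu>-1$ be a real number with $\nu\ne0$. Then all zeros of the polynomial $p(z)=F(-n,\nu+2;-n+1-\nu;z)$ lie in the open unit disk $\mathbb D$.
   Context: The hypergeometric function is $F(a,b;c;z)=\sum_{k\ge0}\frac{(a)_k(b)_k}{(c)_k}\frac{z^k}{k!}$, where $(x)_0=1$ and $(x)_k=x(x+1)\cdots(x+k-1)$; when $a=-n$ with $n\in\mathbb N$ the series terminates at $k=n$ and defines a polynomial for all $z\in\mathbb C$ whenever $c\notin\{0,-1,\dots,1-n\}$. $\mathbb D=\{|z|<1\}$. *)

From HB Require Import structures.
From mathcomp Require Import all_boot all_order all_algebra.
From mathcomp Require Import complex.
From mathcomp Require Import reals.
Set Implicit Arguments. Unset Strict Implicit. Unset Printing Implicit Defensive.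
Import Order.TTheory GRing.Theory Num.Theory.
Local Open Scope ring_scope.

Definition poch (F : ringType) (x : F) (k : nat) : F :=
  \prod_(i < k) (x + i%:R).

(* The terminating hypergeometric polynomial F(-n, b; c; z)
   = sum_{k=0}^n (-n)_k (b)_k / (c)_k  z^k / k!  *)
Definition hyp_poly (F : fieldType) (n : nat) (b c : F) : {poly F} :=
  \poly_(k < n.+1) (poch (- n%:R) k * poch b k / (poch c k * k`!%:R)).

From HB Require Import structures.
From mathcomp Require Import all_boot all_order all_algebra.
From mathcomp Require Import complex.
From mathcomp Require Import reals.
From mathcomp Require Import ring lra zify.
Import Order.TTheory GRing.Theory Num.Theory.
Local Open Scope ring_scope.
Local Open Scope complex_scope.

(* Write a = nu + 2 and b = nu.  The reflection formula for Pochhammer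
   symbols, (1 - b - n)_k (b)_(n-k) = (-1)^k (b)_n, turns the hypergeometric
   polynomial into (b)_n^-1 times
       P_n(z) = sum_k C(n,k) (a)_k (b)_(n-k) z^k,
   a family satisfying the three-term recurrence
       P_(n+2) = (b+n+1) P_(n+1) + ((a+n+1) P_(n+1) - (n+1)(a+b+n) P_n) z.
   Fix |z| >= 1 and let D_n = P_(n+1)(z) - (n+nu+2) z P_n(z).  By induction
   on n we show P_n(z) <> 0 and |D_n| <= |nu| |z| |P_n(z)|: substituting
   E = D_n / z, the recurrence expresses D_(n+1) and P_(n+1)(z) as z times
   two linear combinations of E and P_n(z), and an elementary quadratic
   inequality (lemma [contraction]) carries the bound from n to n+1.  The
   bound itself prevents P_(n+1)(z) = 0, since |n+nu+2| > |nu|. *)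

Section Pochhammer.
Context {F : comNzRingType}.
Implicit Types (x : F) (k m : nat).

Lemma poch0 x : poch x 0 = 1.
Proof. by rewrite /poch big_ord0. Qed.

Lemma pochS x k : poch x k.+1 = poch x k * (x + k%:R).
Proof. by rewrite /poch big_ord_recr. Qed.

Lemma poch1 k : poch (1 : F) k = k`!%:R.
Proof.
elim: k => [|k IH]; first by rewrite poch0.
by rewrite pochS IH factS natrM nat1r mulrC.
Qed.

Lemma poch_add x k m : poch x (k + m) = poch x k * poch (x + k%:R) m.
Proof.
elim: m => [|m IH]; first by rewrite addn0 poch0 mulr1.
by rewrite addnS !pochS IH natrD; ring.
Qed.

(* Reflection: a Pochhammer symbol at the "negative" argument 1 - x - N
   reverses the factors of (x)_N. *)
Lemma poch_reflect x k m :
  poch (1 - x - (k + m)%:R) k * poch x m = (-1) ^+ k * poch x (k + m).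
Proof.
elim: k m => [|k IH] m; first by rewrite poch0 expr0 !mul1r.
rewrite addSnnS pochS exprS -[RHS]mulrA -(IH m.+1) pochS.
have -> : 1 - x - (k + m.+1)%:R + k%:R = - (x + m%:R) by rewrite natrD -natr1; ring.
ring.
Qed.

End Pochhammer.

Section BinomialPochhammer.
Context {F : numFieldType} (a b : F).

Definition bp_coef (n k : nat) : F := 'C(n, k)%:R * poch a k * poch b (n - k).

Definition bp (n : nat) : {poly F} := \poly_(k < n.+1) bp_coef n k.

Lemma coef_bp n k : (bp n)`_k = bp_coef n k.
Proof.
rewrite coef_poly; case: ltnP => // hk.
by rewrite /bp_coef bin_small // !mul0r.
Qed.

Lemma fact_neq0 k : (k`!%:R : F) != 0.
Proof. by rewrite pnatr_eq0 -lt0n fact_gt0. Qed.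

Lemma natr_bin n k : (k <= n)%N ->
  'C(n, k)%:R = n`!%:R / (k`!%:R * (n - k)`!%:R) :> F.
Proof. by move=> hk; rewrite -(bin_fact hk) !natrM mulfK // mulf_neq0 ?fact_neq0. Qed.

(* The coefficientwise form of the three-term recurrence; for j < n+1 it is
   an identity between rational functions of factorials. *)
Lemma bp_coef_rec n j :
  bp_coef n.+2 j.+1 = (b + n.+1%:R) * bp_coef n.+1 j.+1
    + (a + n.+1%:R) * bp_coef n.+1 j - n.+1%:R * (a + b + n%:R) * bp_coef n j.
Proof.
rewrite /bp_coef; case: (ltngtP j n.+1) => hj.
- have [m ->] : exists m, n = (j + m)%N by exists (n - j)%N; lia.
  rewrite !natr_bin; try lia.
  have -> : ((j + m).+2 - j.+1 = m.+1)%N by lia.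
  have -> : ((j + m).+1 - j.+1 = m)%N by lia.
  have -> : ((j + m).+1 - j = m.+1)%N by lia.
  have -> : ((j + m) - j = m)%N by lia.
  rewrite !pochS !factS !natrM; field.
  by rewrite !fact_neq0 -!mulrS !pnatr_eq0.
- by rewrite !bin_small //; try lia; ring.
- subst j; rewrite !binn !subnn (@bin_small n.+1) // (@bin_small n) //.
  by rewrite (pochS a n.+1) !poch0; ring.
Qed.

Lemma bp_rec n : bp n.+2 = (b + n.+1%:R) *: bp n.+1 +
  ((a + n.+1%:R) *: bp n.+1 - (n.+1%:R * (a + b + n%:R)) *: bp n) * 'X.
Proof.
apply/polyP => k; rewrite coefD coefMX !coefZ coefB !coefZ !coef_bp.
case: k => [|j] /=; last by rewrite bp_coef_rec; ring.
by rewrite /bp_coef !bin0 !subn0 !poch0 (pochS b n.+1); ring.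
Qed.

Lemma horner_bp_rec n x : (bp n.+2).[x] = (b + n.+1%:R) * (bp n.+1).[x] +
  ((a + n.+1%:R) * (bp n.+1).[x] - n.+1%:R * (a + b + n%:R) * (bp n).[x]) * x.
Proof. by rewrite bp_rec !hornerE. Qed.

Lemma bp0 : bp 0 = 1.
Proof.
apply/polyP => k; rewrite coef_bp coefC /bp_coef.
by case: k => [|k]; rewrite ?bin0 ?poch0 ?mulr1 // bin_small // !mul0r.
Qed.

Lemma bp1 : bp 1 = b%:P + a *: 'X.
Proof.
apply/polyP => k; rewrite coef_bp coefD coefC coefZ coefX /bp_coef.
by case: k => [|[|k]]; rewrite /= ?bin0 ?binn ?bin_small ?(pochS _ 0) ?poch0 //; ring.
Qed.

(* The terminating hypergeometric polynomial with c = 1 - n - b is a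
   constant multiple of P_n; both Pochhammer symbols at negative arguments
   are evaluated by the reflection formula. *)
Lemma hyp_poly_bp n : poch b n != 0 ->
  hyp_poly n a (- n%:R + 1 - b) = (poch b n)^-1 *: bp n.
Proof.
move=> hbn; apply/polyP => k; rewrite coefZ coef_bp coef_poly.
case: ltnP => hk; last by rewrite /bp_coef bin_small // !mul0r mulr0.
have hkn : (k <= n)%N by [].
have hbnk : poch b (n - k) != 0.
  by move: hbn; rewrite -{1}(subnK hkn) poch_add mulf_eq0 negb_or => /andP[].
have reflect_n : poch (- n%:R : F) k = (-1) ^+ k * n`!%:R / (n - k)`!%:R.
  move: (poch_reflect (1 : F) k (n - k)).
  by rewrite subnKC // subrr sub0r !poch1 => <-; rewrite mulfK ?fact_neq0.
have reflect_b : poch (- n%:R + 1 - b) k = (-1) ^+ k * poch b n / poch b (n - k).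
  move: (poch_reflect b k (n - k)).
  by rewrite subnKC // => <-; rewrite mulfK //; congr poch; ring.
rewrite reflect_n reflect_b /bp_coef (natr_bin _ _ hkn); field.
by rewrite hbnk hbn signr_eq0 !fact_neq0.
Qed.

End BinomialPochhammer.

Section Contraction.
Context {R : realFieldType}.

(* Read p = |E|^2, q = |V|^2 and
   r = Re (E conj V): given |E| <= |nu| |V| and Cauchy-Schwarz, the cross
   term is dominated.  With y = nu^2 q the right-hand side L satisfies
   L^2 - 4 nu^2 p q = (y - p) ((A+2)^2 y - A^2 p) >= 0. *)
Lemma quadratic_bound {A nu p q r : R} : -1 < A -> 0 <= p -> 0 <= q ->
  r ^+ 2 <= p * q -> p <= nu ^+ 2 * q ->
  2 * nu * r <= - A * p + (A + 2) * (nu ^+ 2 * q).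
Proof.
move=> hA hp hq hr; set y := nu ^+ 2 * q => hpy.
have hL : 0 <= - A * p + (A + 2) * y by have [hA0|hA0] := leP 0 A; nra.
have hfactor : 0 <= (y - p) * ((A + 2) ^+ 2 * y - A ^+ 2 * p).
  apply: mulr_ge0; first lra.
  have h1 : 0 <= ((A + 2) ^+ 2 - A ^+ 2) * y by apply: mulr_ge0; nra.
  have h2 : 0 <= A ^+ 2 * (y - p) by apply: mulr_ge0; [exact: sqr_ge0 | lra].
  nra.
have hLsq : 4 * nu ^+ 2 * (p * q) <= (- A * p + (A + 2) * y) ^+ 2.
  have -> : (- A * p + (A + 2) * y) ^+ 2 = 4 * nu ^+ 2 * (p * q)
      + (y - p) * ((A + 2) ^+ 2 * y - A ^+ 2 * p) by rewrite /y; ring.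
  by rewrite lerDl.
have hsq : (2 * nu * r) ^+ 2 <= (- A * p + (A + 2) * y) ^+ 2.
  apply: le_trans hLsq; have -> : (2 * nu * r) ^+ 2 = 4 * nu ^+ 2 * r ^+ 2 by ring.
  by apply: ler_wpM2l => //; apply: mulr_ge0 => //; exact: sqr_ge0.
nra.
Qed.

Lemma shift_sq_gt (m nu : R) : 1 <= m -> -1 < nu -> nu ^+ 2 < (m + nu + 1) ^+ 2.
Proof.
move=> hm hnu; rewrite -subr_gt0.
rewrite (_ : _ - _ = (m + 1) * (m + 1 + 2 * nu)); last by ring.
by apply: mulr_gt0; lra.
Qed.

Lemma scale_bound {s nu X Y : R} : 1 <= s -> X <= nu ^+ 2 * Y -> 0 <= Y ->
  s * X <= nu ^+ 2 * s * (s * Y).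
Proof.
move=> hs hXY hY; have hY' : 0 <= nu ^+ 2 * Y by rewrite mulr_ge0 ?sqr_ge0.
have hs0 : 0 <= s by lra.
rewrite (_ : nu ^+ 2 * s * (s * Y) = s * (s * (nu ^+ 2 * Y))); last by ring.
apply: le_trans (ler_peMl _ hs); first exact: ler_wpM2l.
exact: mulr_ge0.
Qed.

(* The squared modulus |x|^2, available over any real field. *)
Definition abs2 (x : R[i]) : R := complex.Re x ^+ 2 + complex.Im x ^+ 2.

(* The difference of the squares is m times the quantity
   bounded in [quadratic_bound] with A = m + 2 nu. *)
Lemma contraction {m nu : R} {E V : R[i]} : 1 <= m -> -1 < nu ->
  abs2 E <= nu ^+ 2 * abs2 V ->
  abs2 ((m + nu)%:C * E + (nu * (nu + 1))%:C * V)
    <= nu ^+ 2 * abs2 (E + (m + nu + 1)%:C * V).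
Proof.
case: E => e1 e2; case: V => v1 v2; rewrite /abs2 /= => hm hnu hEV.
have cauchy_schwarz :
    (e1 * v1 + e2 * v2) ^+ 2 <= (e1 ^+ 2 + e2 ^+ 2) * (v1 ^+ 2 + v2 ^+ 2).
  have -> : (e1 ^+ 2 + e2 ^+ 2) * (v1 ^+ 2 + v2 ^+ 2)
      = (e1 * v1 + e2 * v2) ^+ 2 + (e1 * v2 - e2 * v1) ^+ 2 by ring.
  by rewrite lerDl sqr_ge0.
have hA : -1 < m + 2 * nu by lra.
have hp : 0 <= e1 ^+ 2 + e2 ^+ 2 by rewrite addr_ge0 ?sqr_ge0.
have hq : 0 <= v1 ^+ 2 + v2 ^+ 2 by rewrite addr_ge0 ?sqr_ge0.
have hbound := quadratic_bound hA hp hq cauchy_schwarz hEV.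
have : 0 <= m * (- (m + 2 * nu) * (e1 ^+ 2 + e2 ^+ 2)
    + (m + 2 * nu + 2) * (nu ^+ 2 * (v1 ^+ 2 + v2 ^+ 2))
    - 2 * nu * (e1 * v1 + e2 * v2)) by apply: mulr_ge0; lra.
lra.
Qed.

Lemma abs2M (x y : R[i]) : abs2 (x * y) = abs2 x * abs2 y.
Proof. by case: x => ? ?; case: y => ? ?; rewrite /abs2 /=; ring. Qed.

Lemma abs2N (x : R[i]) : abs2 (- x) = abs2 x.
Proof. by case: x => ? ?; rewrite /abs2 /=; ring. Qed.

Lemma abs2R (x : R) : abs2 x%:C = x ^+ 2.
Proof. by rewrite /abs2 /=; ring. Qed.

Lemma abs2_ge0 (x : R[i]) : 0 <= abs2 x.
Proof. by rewrite addr_ge0 ?sqr_ge0. Qed.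

Lemma abs2_gt0 (x : R[i]) : x != 0 -> 0 < abs2 x.
Proof.
case: x => x1 x2; rewrite eq_complex negb_and /= => hx.
by rewrite lt_def abs2_ge0 paddr_eq0 ?sqr_ge0 // !sqrf_eq0 negb_and hx.
Qed.

End Contraction.

Section ZerosOutsideDisk.
Context {R : rcfType}.
Variable nu : R.
Hypothesis hnu : -1 < nu.
Variable z : R[i].
Hypothesis hz : 1 <= abs2 z.

Let v n := (bp (nu + 2)%:C nu%:C n).[z].

Let defect n := v n.+1 - (n.+1%:R + nu + 1)%:C * z * v n.

Let controlled n := v n != 0 /\ abs2 (defect n) <= nu ^+ 2 * abs2 z * abs2 (v n).

Lemma z_neq0 : z != 0.
Proof. by apply/eqP => z0; move: hz; rewrite z0 /abs2 /= expr0n addr0 ler10. Qed.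

(* The bound on D_n forces P_(n+1)(z) <> 0: otherwise
   |n+nu+2| |z| |P_n(z)| <= |nu| |z| |P_n(z)|. *)
Lemma controlled_next_neq0 {n} : controlled n -> v n.+1 != 0.
Proof.
move=> [hv hd]; apply/negP => /eqP h0; move: hd.
have hc : nu ^+ 2 < (n.+1%:R + nu + 1) ^+ 2 by rewrite shift_sq_gt // ler1n.
have hzv : 0 < abs2 z * abs2 (v n) by rewrite mulr_gt0 ?abs2_gt0 ?z_neq0.
rewrite /defect h0 sub0r abs2N !abs2M abs2R -!(mulrA _ (abs2 z)).
by rewrite ler_pM2r // leNgt hc.
Qed.

(* Base case: D_0 = nu. *)
Lemma controlled0 : controlled 0.
Proof.
rewrite /controlled /defect /v bp0 bp1 !hornerE; split; first exact: oner_neq0.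
rewrite [X in abs2 X](_ : _ = nu%:C); last first.
  by rewrite ?(rmorphD, rmorph1, rmorph_nat); ring.
rewrite abs2R [abs2 1]/abs2 /= expr1n expr0n addr0 mulr1.
exact: ler_peMr (sqr_ge0 nu) hz.
Qed.

(* Induction step: with E = D_n / z, both D_(n+1) and P_(n+1)(z) are z times
   the linear combinations of E and P_n(z) compared in [contraction]. *)
Lemma controlled_step n : controlled n -> controlled n.+1.
Proof.
move=> ctl_n; have hv1 := controlled_next_neq0 ctl_n.
case: ctl_n => hv hd; split => //.
set m : R := n.+1%:R.
have hm : 1 <= m by rewrite /m ler1n.
set E := defect n / z.
have hE : abs2 E <= nu ^+ 2 * abs2 (v n).
  have hz0 : 0 < abs2 z by rewrite abs2_gt0 ?z_neq0.
  by rewrite -(ler_pM2r hz0) -abs2M /E divfK ?z_neq0 // mulrAC.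
have defect_next : defect n.+1 = z * ((m + nu)%:C * E + (nu * (nu + 1))%:C * v n).
  rewrite /E /defect /m {1}/v horner_bp_rec -/(v n) -/(v n.+1).
  by rewrite ?(rmorphD, rmorphM, rmorph1, rmorph_nat); field; exact: z_neq0.
have v_next : v n.+1 = z * (E + (m + nu + 1)%:C * v n).
  rewrite /E /defect /m.
  by rewrite ?(rmorphD, rmorphM, rmorph1, rmorph_nat); field; exact: z_neq0.
rewrite defect_next v_next !abs2M.
exact: scale_bound hz (contraction hm hnu hE) (abs2_ge0 _).
Qed.

Lemma horner_bp_neq0 n : (bp (nu + 2)%:C nu%:C n).[z] != 0.
Proof.
have ctl : forall k, controlled k.
  by elim=> [|k IH]; [exact: controlled0 | exact: controlled_step].
by case: n => [|n]; [case: (ctl 0%N) | exact: controlled_next_neq0 (ctl n)].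
Qed.

End ZerosOutsideDisk.

Lemma poch_real_neq0 {R : realFieldType} {nu : R} :
  -1 < nu -> nu != 0 -> forall k, poch nu%:C k != 0.
Proof.
move=> hnu hnu0; elim=> [|k IH]; first by rewrite poch0 oner_neq0.
rewrite pochS mulf_neq0 //.
have -> : nu%:C + k%:R = (nu + k%:R)%:C :> R[i] by rewrite rmorphD rmorph_nat.
apply/eqP => /(congr1 (@complex.Re R)) /=; case: k {IH} => [|k].
  by rewrite addr0 => nu0; rewrite nu0 eqxx in hnu0.
have : 1 <= k.+1%:R :> R by rewrite ler1n.
lra.
Qed.

Lemma normc_lt1 {R : rcfType} (x : R[i]) : (`|x| < 1) = (abs2 x < 1).
Proof. by rewrite normc_def -[1]/(1%:C) ltcR -{1}sqrtr1 ltr_sqrt ?ltr01. Qed.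

Theorem lemma4 (R : realType) (n : nat) (nu : R) (hnu : -1 < nu) (hnu0 : nu != 0) :
  forall z : R[i],
    root (hyp_poly n (nu + 2)%:C (- n%:R + 1 - nu)%:C) z -> `|z| < 1.
Proof.
move=> z; have -> : (- n%:R + 1 - nu)%:C = - n%:R + 1 - nu%:C :> R[i].
  by rewrite ?(rmorphB, rmorphD, rmorphN, rmorph1, rmorph_nat).
rewrite hyp_poly_bp ?poch_real_neq0 // => /rootP; rewrite hornerZ => /eqP.
rewrite mulf_eq0 invr_eq0 (negbTE (poch_real_neq0 hnu hnu0 n)) /= => /eqP vz.
rewrite normc_lt1 ltNge; apply/negP => hz.
by have := horner_bp_neq0 _ hnu _ hz n; rewrite vz eqxx.
Qed.
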